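(* Let $\mathcal{E}^*$ be any function mapping pairs (an $\mathcal{ALC}$-formula, an interpretation) to $\mathcal{ALC}$-formulae, let $\varphi$ be an $\mathcal{ALC}$-formula and $M$ an interpretation. If $\mathrm{Mod}(\mathcal{E}^*(\varphi,M))=\mathrm{Mod}(\varphi)\cup[M]_\varphi$, then (i) $\mathcal{E}^*(\varphi,M)\equiv\varphi$ if $M\models\varphi$, and (ii) $\mathcal{E}^*(\varphi,M)\equiv\varphi\vee\bigwedge\mathrm{lit}(f)$ if $M\not\models\varphi$, where $\mathrm{qm}(\neg\varphi,M)=(T,o,f)$.
   Context: $\mathcal{ALC}$ concepts: $C::=A\mid\neg C\mid(C\sqcap C)\mid\exists r.C$. $\mathcal{ALC}$-formulae: $\phi::=\alpha\mid\neg\phi\mid(\phi\wedge\phi)$, atomic $\alpha::=C(a)\mid r(a,b)\mid(C=\top)$; $\neg\neg\psi$ identified with $\psi$; $\vee$ usual abbreviation. A literal is an atomic formula or its negation. Interpretations: countable nonempty domain, standard semantics. $\mathrm{Mod}(\varphi)$: interpretations satisfying $\varphi$; $\equiv$: same models. $\mathrm{Sub}(\alpha)=\mathrm{Sub}(\neg\alpha)=\{\alpha,\neg\alpha\}$ for atomic $\alpha$; $\mathrm{Sub}(\psi\wedge\psi')=\mathrm{Sub}(\neg(\psi\wedge\psi'))=\{\psi\wedge\psi',\neg(\psi\wedge\psi')\}\cup\mathrm{Sub}(\psi)\cup\mathrm{Sub}(\psi')$. $\mathrm{con}(\varphi)$: smallest set of concepts containing $C$ whenever $(C=\top)$ or $C(a)$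 lies in $\mathrm{Sub}(\varphi)$, closed under subconcepts of $\sqcap$, $\exists r.\cdot$, and under single negation. For an interpretation $I$, $\mathrm{qm}(\varphi,I)=(T,o,f)$ with $T=\{c(x)\mid x\in\Delta^I\}$, $c(x)=\{C\in\mathrm{con}(\varphi)\mid x\in C^I\}$, $o(a)=c(a^I)$, $f=\{\psi\in\mathrm{Sub}(\varphi)\mid I\models\psi\}$. $\mathrm{lit}(f)$: literals in $f$. $\mathcal{L}_{lit}(\varphi)$: Boolean combinations of atomic formulae occurring in $\varphi$; $M'\equiv_\varphi M$ iff they satisfy the same formulae of $\mathcal{L}_{lit}(\varphi)$; $[M]_\varphi=\{M'\mid M'\equiv_\varphi M\}$. *)

From Stdlib Require Import List Classical ClassicalDescription.
Import ListNotations.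
Set Implicit Arguments.

(* Concept names, role names and individual names are each indexed by nat. *)
Inductive concept : Type :=
| CName : nat -> concept
| CNeg : concept -> concept
| CAnd : concept -> concept -> concept
| CEx : nat -> concept -> concept.

(* Atomic formulae: C(a), r(a,b), (C = T). *)
Inductive atom : Type :=
| AConc : concept -> nat -> atom
| ARole : nat -> nat -> nat -> atom
| ATop : concept -> atom.

Inductive formula : Type :=
| FAt : atom -> formula
| FNeg : formula -> formula
| FAnd : formula -> formula -> formula.

Definition FOr (p q : formula) : formula := FNeg (FAnd (FNeg p) (FNeg q)).

Record Interp : Type := {
  dom : Type;
  cint : nat -> dom -> Prop;
  rint : nat -> dom -> dom -> Prop;
  iint : nat -> dom;
  dom_nonempty : inhabited dom;
  dom_countable : exists f : dom -> nat, forall x y, f x = f y -> x = y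
}.

Fixpoint csem (I : Interp) (C : concept) : dom I -> Prop :=
  match C with
  | CName A => cint I A
  | CNeg D => fun x => ~ csem I D x
  | CAnd D E => fun x => csem I D x /\ csem I E x
  | CEx r D => fun x => exists y, rint I r x y /\ csem I D y
  end.

Definition asat (I : Interp) (a : atom) : Prop :=
  match a with
  | AConc C n => csem I C (iint I n)
  | ARole r m n => rint I r (iint I m) (iint I n)
  | ATop C => forall x, csem I C x
  end.

Fixpoint sat (I : Interp) (p : formula) : Prop :=
  match p with
  | FAt a => asat I a
  | FNeg q => ~ sat I q
  | FAnd q r => sat I q /\ sat I r
  end.

Definition Mod (p : formula) : Interp -> Prop := fun I => sat I p.
Definition fequiv (p q : formula) : Prop := forall I, Mod p I <-> Mod q I.

Fixpoint atoms_of (p : formula) : list atom :=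
  match p with
  | FAt a => [a]
  | FNeg q => atoms_of q
  | FAnd q r => atoms_of q ++ atoms_of r
  end.

(* L_lit(phi): Boolean combinations of atomic formulae occurring in phi. *)
Definition in_Llit (phi psi : formula) : Prop :=
  forall a, In a (atoms_of psi) -> In a (atoms_of phi).

Definition lit_equiv (phi : formula) (M' M : Interp) : Prop :=
  forall psi, in_Llit phi psi -> (sat M' psi <-> sat M psi).

Definition lit_class (phi : formula) (M : Interp) : Interp -> Prop :=
  fun M' => lit_equiv phi M' M.

(* Sub(phi); Sub(~psi) = Sub(psi) for every psi (with ~~psi identified with psi). *)
Fixpoint Sub (p : formula) : list formula :=
  match p with
  | FAt a => [FAt a; FNeg (FAt a)]
  | FNeg q => Sub q
  | FAnd q r => FAnd q r :: FNeg (FAnd q r) :: Sub q ++ Sub r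
  end.

Definition cneg (C : concept) : concept :=
  match C with CNeg D => D | _ => CNeg C end.

Fixpoint subconcepts (C : concept) : list concept :=
  C :: match C with
       | CName _ => []
       | CNeg D => subconcepts D
       | CAnd D E => subconcepts D ++ subconcepts E
       | CEx _ D => subconcepts D
       end.

Definition base_concepts (p : formula) : list concept :=
  flat_map (fun q => match q with
                     | FAt (AConc C _) => [C]
                     | FAt (ATop C) => [C]
                     | _ => []
                     end) (Sub p).

Definition con (p : formula) : list concept :=
  let S := flat_map subconcepts (base_concepts p) in
  S ++ map cneg S.

Definition is_literal (p : formula) : bool :=
  match p with
  | FAt _ => true
  | FNeg (FAt _) => true
  | _ => false
  end.

Definition satb (I : Interp) (p : formula) : bool :=
  if excluded_middle_informative (sat I p) then true else false.

Record QM (I : Interp) : Type := {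
  qm_T : (concept -> Prop) -> Prop;
  qm_o : nat -> (concept -> Prop);
  qm_f : list formula
}.

Definition qm (phi : formula) (I : Interp) : QM I :=
  let c := fun x : dom I => fun C => In C (con phi) /\ csem I C x in
  {| qm_T := fun S => exists x, S = c x;
     qm_o := fun a => c (iint I a);
     qm_f := filter (satb I) (Sub phi) |}.

Definition lit (f : list formula) : list formula := filter is_literal f.

(* finite conjunction; the empty case (never used for lit(f), which is
   always nonempty) is a tautology *)
Fixpoint bigAnd (l : list formula) : formula :=
  match l with
  | [] => FOr (FAt (ATop (CName 0))) (FNeg (FAt (ATop (CName 0))))
  | [x] => x
  | x :: xs => FAnd x (bigAnd xs)
  end.

From Stdlib Require Import List Classical ClassicalDescription.

(* The literals of Sub(phi) that M satisfies fix, for every atom of phi, the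
   truth value it has in M; so their conjunction holds in I exactly when I
   agrees with M on all atoms of phi, i.e. on all of L_lit(phi), i.e. when
   I is in [M]_phi.  Then (ii) is Mod(phi) u [M]_phi written as a disjunction,
   and for (i) the class [M]_phi lies inside Mod(phi) because phi itself is
   in L_lit(phi). *)

Lemma sat_FOr I p q : sat I (FOr p q) <-> sat I p \/ sat I q.
Proof. cbn; tauto. Qed.

Lemma sat_bigAnd I l : sat I (bigAnd l) <-> (forall x, In x l -> sat I x).
Proof.
  induction l as [|x [|y l] IH].
  - cbn; split; [intros _ x []|tauto].
  - cbn; split; [intros H z [<-|[]]; exact H|intros H; apply H; now left].
  - change (bigAnd (x :: y :: l)) with (FAnd x (bigAnd (y :: l))).
    cbn [sat]; rewrite IH; split.
    + intros [Hx Hl] z [<-|Hz]; auto.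
    + intros H; split; [apply H; now left|intros z Hz; apply H; now right].
Qed.

Lemma satb_true I p : satb I p = true <-> sat I p.
Proof.
  unfold satb; destruct (excluded_middle_informative (sat I p)); split; auto.
  discriminate.
Qed.

Lemma in_lit_qm_f psi M l :
  In l (lit (qm_f (qm psi M))) <-> In l (Sub psi) /\ is_literal l = true /\ sat M l.
Proof. cbn; unfold lit; rewrite !filter_In, satb_true; tauto. Qed.

Lemma literal_in_Sub p l : In l (Sub p) -> is_literal l = true ->
  exists a, In a (atoms_of p) /\ (l = FAt a \/ l = FNeg (FAt a)).
Proof.
  induction p as [a|p IH|p IH1 q IH2]; cbn.
  - intros [<-|[<-|[]]] _; exists a; auto.
  - exact IH.
  - intros [<-|[<-|Hl]] Hlit; try discriminate.
    apply in_app_or in Hl as [Hl|Hl];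
      [destruct (IH1 Hl Hlit) as (a & Ha & E)|destruct (IH2 Hl Hlit) as (a & Ha & E)];
      exists a; split; auto; apply in_or_app; auto.
Qed.

Lemma atom_literals_in_Sub p a :
  In a (atoms_of p) -> In (FAt a) (Sub p) /\ In (FNeg (FAt a)) (Sub p).
Proof.
  induction p as [b|p IH|p IH1 q IH2]; cbn.
  - intros [<-|[]]; auto.
  - exact IH.
  - intros Ha; apply in_app_or in Ha as [Ha|Ha];
      [destruct (IH1 Ha)|destruct (IH2 Ha)];
      split; right; right; apply in_or_app; auto.
Qed.

Lemma lit_equiv_of_atoms phi I M :
  (forall a, In a (atoms_of phi) -> (asat I a <-> asat M a)) -> lit_equiv phi I M.
Proof.
  intros Hat psi; unfold in_Llit; induction psi as [a|psi IH|psi1 IH1 psi2 IH2]; cbn.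
  - intros Hin; apply Hat, Hin; now left.
  - intros Hin; rewrite IH; tauto.
  - intros Hin; rewrite IH1, IH2; [tauto| |];
      intros a Ha; apply Hin, in_or_app; auto.
Qed.

Lemma sat_lit_class phi M I : lit_class phi M I -> sat M phi -> sat I phi.
Proof. intros HI; apply HI; intros a Ha; exact Ha. Qed.

Lemma sat_bigAnd_lit_qm psi M I :
  sat I (bigAnd (lit (qm_f (qm psi M)))) <-> lit_class psi M I.
Proof.
  rewrite sat_bigAnd; split.
  - intros Hlits; apply lit_equiv_of_atoms; intros a Ha.
    destruct (atom_literals_in_Sub _ _ Ha) as [Hpos Hneg].
    destruct (classic (asat M a)) as [HMa|HMa].
    + enough (sat I (FAt a)) by (cbn in *; tauto).
      apply Hlits, in_lit_qm_f; auto.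
    + enough (sat I (FNeg (FAt a))) by (cbn in *; tauto).
      apply Hlits, in_lit_qm_f; auto.
  - intros HI l Hl; apply in_lit_qm_f in Hl as (Hsub & Hlit & HMl).
    destruct (literal_in_Sub _ _ Hsub Hlit) as (a & Ha & [-> | ->]);
      apply HI; auto; intros b [<-|[]]; exact Ha.
Qed.

Theorem mainTheorem6 (Estar : formula -> Interp -> formula) (phi : formula) (M : Interp) :
  (forall I, Mod (Estar phi M) I <-> (Mod phi I \/ lit_class phi M I)) ->
  (sat M phi -> fequiv (Estar phi M) phi) /\
  (~ sat M phi ->
     fequiv (Estar phi M) (FOr phi (bigAnd (lit (qm_f (qm (FNeg phi) M)))))).
Proof.
  intros HE; split; intros HM I; rewrite HE; unfold Mod.
  - split; [|tauto].
    intros [HI|HI]; [exact HI|exact (sat_lit_class _ _ _ HI HM)].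
  - (* [M]_(~phi) and [M]_phi coincide: ~phi and phi have the same atoms. *)
    rewrite sat_FOr, sat_bigAnd_lit_qm; reflexivity.
Qed.
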